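(* Let $L_{7,2}\oplus L_1$ be the eight-dimensional real Lie algebra with basis $X_1,\dots,X_8$ whose only nonzero brackets (for $i<j$, $[X_i,X_j]=\sum_kC_{ij}^kX_k$) are $C_{23}^1=1,C_{12}^3=1,C_{13}^2=-1,C_{14}^7=\tfrac12,C_{15}^6=\tfrac12,C_{16}^5=-\tfrac12,C_{17}^4=-\tfrac12,C_{24}^5=\tfrac12,C_{25}^4=-\tfrac12,C_{26}^7=\tfrac12,C_{27}^6=-\tfrac12,C_{34}^6=\tfrac12,C_{35}^7=-\tfrac12,C_{36}^4=-\tfrac12,C_{37}^5=\tfrac12$ (so $X_8$ is central), and let $L_{7,7}\oplus L_1$ be the eight-dimensional real Lie algebra with basis $X_1,\dots,X_8$ whose only nonzero brackets are $C_{12}^2=2,C_{13}^3=-2,C_{23}^1=1,C_{14}^4=1,C_{15}^5=-1,C_{25}^4=1,C_{27}^6=1,C_{34}^5=1,C_{16}^6=1,C_{17}^7=-1,C_{36}^7=1$ (so $X_8$ is central). Then $L_{7,2}\oplus L_1$ is a contraction of $\mathfrak{su}(3)$ and of $\mathfrak{su}(2,1)$, while $L_{7,7}\oplus L_1$ is a contraction of $\mathfrak{su}(2,1)$ and of $\mathfrak{sl}(3,\mathbb{R})$.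
   Context: All Lie algebras are over $\mathbb{R}$. Unlisted brackets $[X_i,X_j]$, $i<j$, are zero; the others follow by antisymmetry. Contraction: for a Lie algebra $(V,[\cdot,\cdot])$ and nonsingular linear maps $\Phi_t$, $t\in[1,\infty)$, if $[X,Y]_\infty=\lim_{t\to\infty}\Phi_t^{-1}[\Phi_tX,\Phi_tY]$ exists for all $X,Y$, any Lie algebra isomorphic to $(V,[\cdot,\cdot]_\infty)$ is a contraction of $(V,[\cdot,\cdot])$. $\mathfrak{su}(3)$, $\mathfrak{su}(2,1)$, $\mathfrak{sl}(3,\mathbb{R})$ are the real forms of $\mathfrak{sl}(3,\mathbb{C})$. *)

From HB Require Import structures.
From mathcomp Require Import all_boot all_order all_algebra.
From mathcomp Require Import all_classical all_reals all_analysis.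
From mathcomp Require Import complex.

Set Implicit Arguments.
Unset Strict Implicit.
Unset Printing Implicit Defensive.

Import Order.TTheory GRing.Theory Num.Theory.
Import numFieldNormedType.Exports.
Local Open Scope classical_set_scope.
Local Open Scope ring_scope.

Definition bracket (R : realType) (n : nat) := 'rV[R]_n -> 'rV[R]_n -> 'rV[R]_n.

(* Lie algebra given by structure constants C i j k (1-based indices),
   listed only for i < j and extended by antisymmetry:
   [X_i, X_j] = sum_k C_ij^k X_k. *)
Definition full_consts (R : realType) (c : nat -> nat -> nat -> R) (i j k : nat) : R :=
  if (i < j)%N then c i j k else if (j < i)%N then - c j i k else 0.

Definition sc_bracket (R : realType) (n : nat) (c : nat -> nat -> nat -> R) : bracket R n :=
  fun X Y => \row_(k < n) \sum_(i < n) \sum_(j < n)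
      X 0 i * Y 0 j * full_consts c i.+1 j.+1 k.+1.

Definition c_L72 (R : realType) (i j k : nat) : R :=
  match i, j, k with
  | 2, 3, 1 => 1
  | 1, 2, 3 => 1
  | 1, 3, 2 => -1
  | 1, 4, 7 => 1/2
  | 1, 5, 6 => 1/2
  | 1, 6, 5 => -(1/2)
  | 1, 7, 4 => -(1/2)
  | 2, 4, 5 => 1/2
  | 2, 5, 4 => -(1/2)
  | 2, 6, 7 => 1/2
  | 2, 7, 6 => -(1/2)
  | 3, 4, 6 => 1/2
  | 3, 5, 7 => -(1/2)
  | 3, 6, 4 => -(1/2)
  | 3, 7, 5 => 1/2
  | _, _, _ => 0
  end.

Definition c_L77 (R : realType) (i j k : nat) : R :=
  match i, j, k with
  | 1, 2, 2 => 2
  | 1, 3, 3 => -2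
  | 2, 3, 1 => 1
  | 1, 4, 4 => 1
  | 1, 5, 5 => -1
  | 2, 5, 4 => 1
  | 2, 7, 6 => 1
  | 3, 4, 5 => 1
  | 1, 6, 6 => 1
  | 1, 7, 7 => -1
  | 3, 6, 7 => 1
  | _, _, _ => 0
  end.

Definition L72_L1 (R : realType) : bracket R 8 := @sc_bracket R 8 (@c_L72 R).
Definition L77_L1 (R : realType) : bracket R 8 := @sc_bracket R 8 (@c_L77 R).

Definition lie_isomorphic (R : realType) (n : nat) (br br' : bracket R n) : Prop :=
  exists A : 'M[R]_n, A \in unitmx /\
    forall X Y, br X Y *m A = br' (X *m A) (Y *m A).

Definition contraction_of (R : realType) (n : nat) (br br' : bracket R n) : Prop :=
  exists Phi : R -> 'M[R]_n,
    (forall t : R, 1 <= t -> Phi t \in unitmx) /\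
    exists brinf : bracket R n,
      (forall X Y : 'rV[R]_n,
        (fun t : R => br (X *m Phi t) (Y *m Phi t) *m invmx (Phi t))
          @ +oo --> brinf X Y) /\
      lie_isomorphic brinf br'.

(* The bracket br on R^8 is a coordinate presentation of the real matrix Lie
   algebra g (a real subspace of 3x3 matrices over K, R embedded in K by emb,
   with the commutator bracket): psi is an R-linear bijection R^8 -> g
   intertwining br with the commutator. *)
Definition presents (R : realType) (K : nzRingType) (emb : R -> K)
    (g : 'M[K]_3 -> Prop) (br : bracket R 8) : Prop :=
  exists psi : 'rV[R]_8 -> 'M[K]_3,
    (forall (a : R) x y, psi (a *: x + y) = emb a *: psi x + psi y) /\
    injective psi /\
    (forall A, g A <-> exists x, psi x = A) /\
    (forall x y, psi (br x y) = psi x *m psi y - psi y *m psi x).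

Definition adjmx (R : rcfType) (A : 'M[R[i]]_3) : 'M[R[i]]_3 :=
  (map_mx (fun z => z^*) A)^T.

Definition su3 (R : rcfType) (A : 'M[R[i]]_3) : Prop :=
  adjmx A = - A /\ \tr A = 0.

Definition J21 (R : rcfType) : 'M[R[i]]_3 :=
  \matrix_(i < 3, j < 3) (if i == j then (if (i : nat) == 2%N then -1 else 1) else 0).

Definition su21 (R : rcfType) (A : 'M[R[i]]_3) : Prop :=
  adjmx A *m J21 R + J21 R *m A = 0 /\ \tr A = 0.

Definition sl3R (R : realType) (A : 'M[R]_3) : Prop := \tr A = 0.

Definition is_contraction_of_su3 (R : realType) (br' : bracket R 8) : Prop :=
  exists br, presents (fun a : R => a%:C)%C (@su3 R) br /\ contraction_of br br'.
Definition is_contraction_of_su21 (R : realType) (br' : bracket R 8) : Prop :=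
  exists br, presents (fun a : R => a%:C)%C (@su21 R) br /\ contraction_of br br'.
Definition is_contraction_of_sl3R (R : realType) (br' : bracket R 8) : Prop :=
  exists br, presents (fun a : R => a) (@sl3R R) br /\ contraction_of br br'.

From mathcomp Require Import all_boot all_order all_algebra.
From mathcomp Require Import all_classical all_reals all_analysis.
From mathcomp Require Import complex ring lra.

(* Each of the three algebras has a basis X_1, ..., X_8 of 3x3 matrices in
   which X_1, X_2, X_3 span a subalgebra k (su(2), resp. sl(2,R)) and
   X_4, ..., X_8 a complement p.  Give k weight 0 and p weight 1, and let Phi_t
   multiply the coordinates of weight w by t^-w.  Then
     Phi_t^-1 [Phi_t X_i, Phi_t X_j] = sum_k t^(w_k - w_i - w_j) C_ij^k X_k,
   which converges as t -> oo because [k, k] lies in k, and the limit keeps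
   exactly the terms with w_k = w_i + w_j: it is the semidirect product of k
   with p made abelian.  In the bases below these limits have the structure
   constants of L_{7,2} (+) L_1 (k = su(2)) and of L_{7,7} (+) L_1
   (k = sl(2,R)); that the bases present su(3), su(2,1) and sl(3,R) is checked
   by computing the commutators of the basis matrices. *)

Set Implicit Arguments.
Unset Strict Implicit.
Unset Printing Implicit Defensive.
Import Order.TTheory GRing.Theory Num.Theory.
Import numFieldNormedType.Exports.
Local Open Scope classical_set_scope.
Local Open Scope ring_scope.

(* Concrete ordinals are always built with the proof [isT], so that equal
   ordinals are syntactically equal and matrix entries behave as atoms for
   [field] and [lra]. *)
Notation ord3 k := (@Ordinal 3 k isT).
Notation ord8 k := (@Ordinal 8 k isT).

Lemma ord3P (P : 'I_3 -> Prop) : P (ord3 0) -> P (ord3 1) -> P (ord3 2) -> forall i, P i.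
Proof. by move=> P0 P1 P2 [[|[|[|n]]] lt_n3] //; rewrite (bool_irrelevance lt_n3 isT). Qed.

Lemma ord8P (P : 'I_8 -> Prop) :
  P (ord8 0) -> P (ord8 1) -> P (ord8 2) -> P (ord8 3) ->
  P (ord8 4) -> P (ord8 5) -> P (ord8 6) -> P (ord8 7) -> forall i, P i.
Proof.
move=> P0 P1 P2 P3 P4 P5 P6 P7 [[|[|[|[|[|[|[|[|n]]]]]]]] lt_n8] //.
all: by rewrite (bool_irrelevance lt_n8 isT).
Qed.

Lemma big_ord3 (T : nmodType) (f : 'I_3 -> T) :
  \sum_(i < 3) f i = f (ord3 0) + f (ord3 1) + f (ord3 2).
Proof.
rewrite !big_ord_recl big_ord0 addr0 !addrA.
by congr (_ + _ + _); congr f; apply: val_inj.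
Qed.

Lemma big_ord8 (T : nmodType) (f : 'I_8 -> T) :
  \sum_(i < 8) f i = f (ord8 0) + f (ord8 1) + f (ord8 2) + f (ord8 3) +
                     f (ord8 4) + f (ord8 5) + f (ord8 6) + f (ord8 7).
Proof.
rewrite !big_ord_recl big_ord0 addr0 !addrA.
by congr (_ + _ + _ + _ + _ + _ + _ + _); congr f; apply: val_inj.
Qed.

Section ComplexParts.
Variable R : realType.
Implicit Types x y : R[i].

Lemma complex_eq x y :
  complex.Re x = complex.Re y -> complex.Im x = complex.Im y -> x = y.
Proof. by case: x; case: y => a b c d /= -> ->. Qed.

Lemma complex_parts_sum3 x y z : x + y + z = 0 ->
  complex.Re x + complex.Re y + complex.Re z = 0 /\
  complex.Im x + complex.Im y + complex.Im z = 0.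
Proof. by case: x; case: y; case: z => ? ? ? ? ? ? [<- <-]. Qed.

Lemma complex_parts_conj x y (s t : R) : x^* * s%:C%C + t%:C%C * y = 0 ->
  s * complex.Re x = - (t * complex.Re y) /\ s * complex.Im x = t * complex.Im y.
Proof.
by case: x; case: y => a b c d /= [re im]; split; nra.
Qed.

End ComplexParts.

Section UnitaryAlgebras.
Variable R : realType.
Implicit Types A : 'M[R[i]]_3.

Lemma trace_parts A : \tr A = 0 ->
  complex.Re (A (ord3 0) (ord3 0)) + complex.Re (A (ord3 1) (ord3 1)) +
    complex.Re (A (ord3 2) (ord3 2)) = 0 /\
  complex.Im (A (ord3 0) (ord3 0)) + complex.Im (A (ord3 1) (ord3 1)) +
    complex.Im (A (ord3 2) (ord3 2)) = 0.
Proof. by rewrite /mxtrace big_ord3 => /complex_parts_sum3. Qed.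

Lemma su3_conj A i j : su3 A -> (A j i)^* * 1%:C%C + 1%:C%C * A i j = 0.
Proof.
case=> /matrixP /(_ i j); rewrite !mxE => -> _.
by rewrite rmorph1 mulr1 mul1r addNr.
Qed.

Definition sg21 (i : 'I_3) : R := if (i : nat) == 2 then -1 else 1.

Lemma J21E : J21 R = diag_mx (\row_i (sg21 i)%:C%C).
Proof.
apply/matrixP => i j; rewrite !mxE; have [->|_] := eqVneq i j; last by rewrite mulr0n.
by rewrite mulr1n /sg21; case: ifP; rewrite ?rmorphN rmorph1.
Qed.

Lemma su21_conj A i j : su21 A ->
  (A j i)^* * (sg21 j)%:C%C + (sg21 i)%:C%C * A i j = 0.
Proof.
by case=> /matrixP /(_ i j); rewrite J21E mul_mx_diag mul_diag_mx !mxE.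
Qed.

End UnitaryAlgebras.

Section GradedContraction.
Variables (R : realType) (n : nat) (w : 'I_n -> nat).

Lemma cvg_inv_pinfty : t^-1 @[t --> +oo] --> (0 : R).
Proof.
apply/gtr0_cvgV0; last exact: cvg_id.
by exists 0.
Unshelve. all: by end_near. Qed.

Lemma cvg_weight_ratio (a b : nat) (c : R) : ((a < b)%N -> c = 0) ->
  c * ((t^-1) ^+ a / (t^-1) ^+ b) @[t --> +oo] --> (if a == b then c else 0).
Proof.
case: ltngtP => [_ /(_ isT) ->|ba _|<- _].
- by under eq_cvg do rewrite mul0r; exact: cvg_cst.
- rewrite -[0](mulr0 c); apply: cvgMl_tmp.
  have -> : 0 = 0 ^+ (a - b) :> R by rewrite expr0n subn_eq0 leqNgt ba.
  have pow_cvg := cvg_comp _ _ cvg_inv_pinfty (@exprn_continuous R (a - b) 0).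
  apply: cvg_trans (near_eq_cvg _) pow_cvg.
  by near=> t; rewrite /= expfB.
- apply: cvg_trans (near_eq_cvg _) (cvg_cst c).
  near=> t; rewrite divff ?mulr1 // expf_neq0 // invr_eq0 gt_eqF //.
Unshelve. all: by end_near. Qed.

Lemma cvg_row (f : 'I_n -> R -> R) (l : 'I_n -> R) :
  (forall k, f k t @[t --> +oo] --> l k) ->
  (\row_k f k t) @[t --> +oo] --> \row_k l k.
Proof.
have row_deltaE (g : 'I_n -> R) : \row_k g k = \sum_k g k *: delta_mx 0 k.
  by rewrite [LHS]row_sum_delta; apply: eq_bigr => k _; rewrite mxE.
move=> fl; under eq_cvg do rewrite row_deltaE; rewrite row_deltaE.
apply: cvg_big => [|k _]; first exact: add_continuous.
exact: cvgZr_tmp.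
Qed.

Lemma cvg_sum m (f : 'I_m -> R -> R) (l : 'I_m -> R) :
  (forall k, f k t @[t --> +oo] --> l k) ->
  (\sum_k f k t) @[t --> +oo] --> \sum_k l k.
Proof. by move=> fl; apply: cvg_big => //; exact: add_continuous. Qed.

Definition weight_scaling (t : R) : 'M[R]_n := diag_mx (\row_i (t^-1) ^+ w i).

Lemma weight_scaling_unit t : t != 0 -> weight_scaling t \in unitmx.
Proof.
move=> t0; rewrite unitmxE det_diag unitfE; apply/prodf_neq0 => i _.
by rewrite mxE expf_neq0 // invr_eq0.
Qed.

Lemma weight_scaled_bracketE (c : nat -> nat -> nat -> R) X Y t : t != 0 ->
  sc_bracket c (X *m weight_scaling t) (Y *m weight_scaling t)
    *m invmx (weight_scaling t) =
  \row_k \sum_i \sum_j X 0 i * Y 0 j *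
     (full_consts c i.+1 j.+1 k.+1 * ((t^-1) ^+ (w i + w j) / (t^-1) ^+ w k)).
Proof.
move=> t0; apply: (canLR (mulmxK (weight_scaling_unit t0))).
apply/rowP => k; rewrite !mul_mx_diag !mxE mulr_suml; apply: eq_bigr => i _.
rewrite mulr_suml; apply: eq_bigr => j _.
rewrite !mxE exprD -!mulrA; congr (_ * _); rewrite mulrCA; congr (_ * _).
rewrite mulVf ?mulr1 ?expf_neq0 ?invr_eq0 //.
by rewrite [RHS]mulrC mulrA.
Qed.

Section Graded.
Variables c c' : nat -> nat -> nat -> R.
Hypothesis c_filtered : forall i j k : 'I_n, (i < j)%N ->
  (w i + w j < w k)%N -> c i.+1 j.+1 k.+1 = 0.
Hypothesis c'_graded : forall i j k : 'I_n, (i < j)%N ->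
  c' i.+1 j.+1 k.+1 = if (w i + w j)%N == w k then c i.+1 j.+1 k.+1 else 0.

Lemma full_consts_filtered (i j k : 'I_n) :
  (w i + w j < w k)%N -> full_consts c i.+1 j.+1 k.+1 = 0.
Proof.
rewrite /full_consts !ltnS; case: (ltngtP i j) => [ij|ji|//].
- exact: c_filtered.
- by rewrite addnC => /(c_filtered ji) ->; rewrite oppr0.
Qed.

Lemma full_consts_graded (i j k : 'I_n) : full_consts c' i.+1 j.+1 k.+1 =
  if (w i + w j)%N == w k then full_consts c i.+1 j.+1 k.+1 else 0.
Proof.
rewrite /full_consts !ltnS; case: (ltngtP i j) => [ij|ji|_]; first exact: c'_graded.
  by rewrite (c'_graded k ji) addnC; case: ifP; rewrite ?oppr0.
by case: ifP.
Qed.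

Lemma graded_contraction : contraction_of (@sc_bracket R n c) (sc_bracket c').
Proof.
exists weight_scaling; split.
  by move=> t t1; apply: weight_scaling_unit; rewrite gt_eqF // (lt_le_trans ltr01).
exists (sc_bracket c'); split; last first.
  by exists 1%:M; split=> [|X Y]; rewrite ?unitmx1 ?mulmx1.
move=> X Y; apply: (@cvg_trans _ ((fun t => \row_k \sum_i \sum_j X 0 i * Y 0 j *
     (full_consts c i.+1 j.+1 k.+1 * ((t^-1) ^+ (w i + w j) / (t^-1) ^+ w k))) @ +oo)).
  by apply: near_eq_cvg; near=> t; rewrite weight_scaled_bracketE // gt_eqF.
apply: cvg_row => k; apply: cvg_sum => i; apply: cvg_sum => j.
rewrite full_consts_graded; apply: cvgMl_tmp; apply: cvg_weight_ratio.
exact: full_consts_filtered.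
Unshelve. all: by end_near. Qed.

End Graded.
End GradedContraction.

Section BasisMap.
Variables (R : realType) (K : comNzRingType) (emb : {rmorphism R -> K}) (n m : nat).
Variable E : 'I_n -> 'M[K]_m.

Definition basis_map (x : 'rV[R]_n) : 'M[K]_m := \sum_k emb (x 0 k) *: E k.

Lemma basis_map_lin (a : R) x y :
  basis_map (a *: x + y) = emb a *: basis_map x + basis_map y.
Proof.
rewrite /basis_map scaler_sumr -big_split; apply: eq_bigr => k _.
by rewrite !mxE rmorphD rmorphM scalerDl scalerA.
Qed.

Definition commutator (A B : 'M[K]_m) := A *m B - B *m A.

Lemma commutator_basis_map x y : commutator (basis_map x) (basis_map y) =
  \sum_i \sum_j (emb (x 0 i) * emb (y 0 j)) *: commutator (E i) (E j).
Proof.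
rewrite /commutator /basis_map !mulmx_suml.
under eq_bigr do rewrite mulmx_sumr.
under [X in _ - X]eq_bigr do rewrite mulmx_sumr.
rewrite [X in _ - X]exchange_big -sumrB; apply: eq_bigr => i _.
rewrite -sumrB; apply: eq_bigr => j _.
by rewrite -!scalemxAl -!scalemxAr !scalerA [emb _ * _]mulrC scalerBr.
Qed.

Variable c : nat -> nat -> nat -> R.
Hypothesis basis_commutator : forall i j : 'I_n, (i < j)%N ->
  commutator (E i) (E j) = \sum_(k < n) emb (c i.+1 j.+1 k.+1) *: E k.

Lemma basis_commutator_full (i j : 'I_n) :
  commutator (E i) (E j) = \sum_(k < n) emb (full_consts c i.+1 j.+1 k.+1) *: E k.
Proof.
rewrite /full_consts !ltnS; case: (ltngtP i j) => [ij|ji|/val_inj->].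
- exact: basis_commutator.
- rewrite [LHS]/commutator -opprB -/(commutator (E j) (E i)) basis_commutator // -sumrN.
  by apply: eq_bigr => k _; rewrite rmorphN scaleNr.
- by rewrite /commutator subrr big1 // => k _; rewrite rmorph0 scale0r.
Qed.

Lemma basis_map_bracket x y :
  basis_map (sc_bracket c x y) = commutator (basis_map x) (basis_map y).
Proof.
rewrite commutator_basis_map /basis_map.
under eq_bigr => k _ do rewrite mxE rmorph_sum scaler_suml.
under eq_bigr => k _ do under eq_bigr => i _ do rewrite rmorph_sum scaler_suml.
rewrite exchange_big; apply: eq_bigr => i _.
rewrite exchange_big; apply: eq_bigr => j _.
rewrite basis_commutator_full scaler_sumr; apply: eq_bigr => k _.
by rewrite !rmorphM scalerA.
Qed.
End BasisMap.

Section EntryBasis.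
Variables (K : comNzRingType) (n m : nat) (e : nat -> nat -> nat -> K).

Definition entry_basis (k : 'I_n) : 'M[K]_m := \matrix_(a, b) e k a b.

Lemma entry_basis_commutator (i j : 'I_n) (c : 'I_n -> K) :
  (forall a b : 'I_m,
     \sum_(l < m) (e i a l * e j l b - e j a l * e i l b) = \sum_k c k * e k a b) ->
  commutator (entry_basis i) (entry_basis j) = \sum_k c k *: entry_basis k.
Proof.
move=> ceq; apply/matrixP => a b; rewrite !mxE summxE.
under [RHS]eq_bigr do rewrite !mxE.
rewrite -ceq -sumrB; apply: eq_bigr => l _; by rewrite !mxE.
Qed.

Lemma basis_map_entry (R : realType) (emb : {rmorphism R -> K}) x (a b : 'I_m) :
  basis_map emb entry_basis x a b = \sum_k emb (x 0 k) * e k a b.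
Proof. by rewrite summxE; apply: eq_bigr => k _; rewrite !mxE. Qed.

End EntryBasis.

Lemma presents_of_entries (R : realType) (K : comNzRingType)
    (emb : {rmorphism R -> K}) (g : 'M[K]_3 -> Prop) (e : nat -> nat -> nat -> K)
    (coord : 'M[K]_3 -> 'rV[R]_8) (c : nat -> nat -> nat -> R) :
  let psi := basis_map emb (@entry_basis K 8 3 e) in
  (forall x, coord (psi x) = x) ->
  (forall x, g (psi x)) ->
  (forall A, g A -> psi (coord A) = A) ->
  (forall (i j : 'I_8) (a b : 'I_3), (i < j)%N ->
     \sum_(l < 3) (e i a l * e j l b - e j a l * e i l b) =
     \sum_(k < 8) emb (c i.+1 j.+1 k.+1) * e k a b) ->
  presents emb g (sc_bracket c).
Proof.
move=> psi coordK ing onto commE; exists psi; split; first exact: basis_map_lin.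
split; first exact: can_inj coordK.
split=> [A|x y].
  by split=> [/onto <-|[x <-]]; [exists (coord A) | exact: ing].
apply: basis_map_bracket => i j ij.
by apply: entry_basis_commutator => a b; exact: commE.
Qed.

Definition iw_weight (i : 'I_8) : nat := (3 <= i)%N.

Section Su3.
Variable R : realType.

(* [su3_entry k a b] is the entry (a, b) of the basis matrix X_(k+1), with
   0-based indices; the structure constants [su3_consts i j k] use the 1-based
   indices of [sc_bracket]. *)
Definition su3_entry (k a b : nat) : R[i] :=
  match k, a, b with
  | 0, 0, 1 | 0, 1, 0 => Complex 0 (-1/2)
  | 1, 0, 1 => Complex (-1/2) 0
  | 1, 1, 0 => Complex (1/2) 0
  | 2, 0, 0 => Complex 0 (-1/2)
  | 2, 1, 1 => Complex 0 (1/2)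
  | 3, 0, 2 | 3, 2, 0 => Complex 0 1
  | 4, 1, 2 | 4, 2, 1 => Complex 0 1
  | 5, 0, 2 => Complex 1 0
  | 5, 2, 0 => Complex (-1) 0
  | 6, 1, 2 => Complex 1 0
  | 6, 2, 1 => Complex (-1) 0
  | 7, 0, 0 | 7, 1, 1 => Complex 0 1
  | 7, 2, 2 => Complex 0 (-2)
  | _, _, _ => 0
  end.

Definition su3_coord (A : 'M[R[i]]_3) : 'rV[R]_8 := \row_(k < 8)
  match (k : nat) with
  | 0 => - 2 * complex.Im (A (ord3 0) (ord3 1))
  | 1 => - 2 * complex.Re (A (ord3 0) (ord3 1))
  | 2 => - complex.Im (A (ord3 0) (ord3 0)) + complex.Im (A (ord3 1) (ord3 1))
  | 3 => complex.Im (A (ord3 0) (ord3 2))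
  | 4 => complex.Im (A (ord3 1) (ord3 2))
  | 5 => complex.Re (A (ord3 0) (ord3 2))
  | 6 => complex.Re (A (ord3 1) (ord3 2))
  | _ => (complex.Im (A (ord3 0) (ord3 0)) + complex.Im (A (ord3 1) (ord3 1))) / 2
  end.

Definition su3_consts (i j k : nat) : R :=
  match i, j, k with
  | 1, 2, 3 => 1
  | 1, 3, 2 => -1
  | 1, 4, 7 => 1/2
  | 1, 5, 6 => 1/2
  | 1, 6, 5 => -(1/2)
  | 1, 7, 4 => -(1/2)
  | 2, 3, 1 => 1
  | 2, 4, 5 => 1/2
  | 2, 5, 4 => -(1/2)
  | 2, 6, 7 => 1/2
  | 2, 7, 6 => -(1/2)
  | 3, 4, 6 => 1/2
  | 3, 5, 7 => -(1/2)
  | 3, 6, 4 => -(1/2)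
  | 3, 7, 5 => 1/2
  | 4, 5, 2 => 2
  | 4, 6, 3 => 2
  | 4, 6, 8 => -1
  | 4, 7, 1 => 2
  | 4, 8, 6 => 3
  | 5, 6, 1 => 2
  | 5, 7, 3 => -2
  | 5, 7, 8 => -1
  | 5, 8, 7 => 3
  | 6, 7, 2 => 2
  | 6, 8, 4 => -3
  | 7, 8, 5 => -3
  | _, _, _ => 0
  end.

Local Notation psi := (basis_map (real_complex R) (@entry_basis _ 8 3 su3_entry)).

Lemma su3_coordK x : su3_coord (psi x) = x.
Proof.
apply/rowP; elim/ord8P; rewrite !mxE !basis_map_entry !big_ord8;
  cbn [su3_entry nat_of_ord] => /=; by field.
Qed.

Lemma su3_psi x : su3 (psi x).
Proof.
split.
  apply/matrixP => a b; rewrite !mxE !basis_map_entry !big_ord8.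
  elim/ord3P: a; elim/ord3P: b; cbn [su3_entry nat_of_ord];
    apply: complex_eq => /=; by field.
rewrite /mxtrace big_ord3 !basis_map_entry !big_ord8; cbn [su3_entry nat_of_ord].
by apply: complex_eq => /=; field.
Qed.

Lemma su3_psi_coord A : su3 A -> psi (su3_coord A) = A.
Proof.
move=> su3A; have [tr_re tr_im] := trace_parts su3A.2.
apply/matrixP => a b; rewrite basis_map_entry big_ord8 !mxE.
move: (complex_parts_conj (su3_conj a b su3A)) (complex_parts_conj (su3_conj b a su3A)).
elim/ord3P: a; elim/ord3P: b; cbn [su3_entry nat_of_ord] => -[? ?] [? ?];
  apply: complex_eq => /=; lra.
Qed.

Lemma su3_commutators (i j : 'I_8) (a b : 'I_3) : (i < j)%N ->
  \sum_(l < 3) (su3_entry i a l * su3_entry j l b - su3_entry j a l * su3_entry i l b) =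
  \sum_(k < 8) (su3_consts i.+1 j.+1 k.+1)%:C%C * su3_entry k a b.
Proof.
rewrite !big_ord3 !big_ord8; elim/ord8P: i; elim/ord8P: j => // _.
all: elim/ord3P: a; elim/ord3P: b; cbn [su3_entry su3_consts nat_of_ord];
  apply: complex_eq => /=; by field.
Qed.

Lemma su3_presentation : presents (fun a : R => a%:C%C) (@su3 R) (sc_bracket su3_consts).
Proof.
exact: (presents_of_entries su3_coordK su3_psi su3_psi_coord su3_commutators).
Qed.

Lemma su3_contracts_to_L72 : contraction_of (@sc_bracket R 8 su3_consts) (@L72_L1 R).
Proof.
apply: (graded_contraction (w := iw_weight)); do 3 elim/ord8P; by [].
Qed.

End Su3.

Section Su21Su2.
Variable R : realType.

Definition su21_su2_entry (k a b : nat) : R[i] :=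
  match k, a, b with
  | 0, 0, 1 | 0, 1, 0 => Complex 0 (-1/2)
  | 1, 0, 1 => Complex (-1/2) 0
  | 1, 1, 0 => Complex (1/2) 0
  | 2, 0, 0 => Complex 0 (-1/2)
  | 2, 1, 1 => Complex 0 (1/2)
  | 3, 0, 2 => Complex 0 1
  | 3, 2, 0 => Complex 0 (-1)
  | 4, 1, 2 => Complex 0 1
  | 4, 2, 1 => Complex 0 (-1)
  | 5, 0, 2 | 5, 2, 0 => Complex 1 0
  | 6, 1, 2 | 6, 2, 1 => Complex 1 0
  | 7, 0, 0 | 7, 1, 1 => Complex 0 1
  | 7, 2, 2 => Complex 0 (-2)
  | _, _, _ => 0
  end.

Definition su21_su2_consts (i j k : nat) : R :=
  match i, j, k with
  | 1, 2, 3 => 1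
  | 1, 3, 2 => -1
  | 1, 4, 7 => 1/2
  | 1, 5, 6 => 1/2
  | 1, 6, 5 => -(1/2)
  | 1, 7, 4 => -(1/2)
  | 2, 3, 1 => 1
  | 2, 4, 5 => 1/2
  | 2, 5, 4 => -(1/2)
  | 2, 6, 7 => 1/2
  | 2, 7, 6 => -(1/2)
  | 3, 4, 6 => 1/2
  | 3, 5, 7 => -(1/2)
  | 3, 6, 4 => -(1/2)
  | 3, 7, 5 => 1/2
  | 4, 5, 2 => -2
  | 4, 6, 3 => -2
  | 4, 6, 8 => 1
  | 4, 7, 1 => -2
  | 4, 8, 6 => 3
  | 5, 6, 1 => -2
  | 5, 7, 3 => 2
  | 5, 7, 8 => 1
  | 5, 8, 7 => 3
  | 6, 7, 2 => -2
  | 6, 8, 4 => -3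
  | 7, 8, 5 => -3
  | _, _, _ => 0
  end.

Local Notation psi := (basis_map (real_complex R) (@entry_basis _ 8 3 su21_su2_entry)).

(* This basis agrees with that of su(3) on and above the diagonal, which is
   all that [su3_coord] reads. *)
Lemma su21_su2_coordK x : su3_coord (psi x) = x.
Proof.
apply/rowP; elim/ord8P; rewrite !mxE !basis_map_entry !big_ord8;
  cbn [su21_su2_entry nat_of_ord] => /=; by field.
Qed.

Lemma su21_su2_psi x : su21 (psi x).
Proof.
split.
  apply/matrixP => a b; rewrite J21E mul_mx_diag mul_diag_mx !mxE !basis_map_entry !big_ord8 /sg21.
  elim/ord3P: a; elim/ord3P: b; cbn [su21_su2_entry nat_of_ord];
    apply: complex_eq => /=; by field.
rewrite /mxtrace big_ord3 !basis_map_entry !big_ord8; cbn [su21_su2_entry nat_of_ord].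
by apply: complex_eq => /=; field.
Qed.

Lemma su21_su2_psi_coord A : su21 A -> psi (su3_coord A) = A.
Proof.
move=> su21A; have [tr_re tr_im] := trace_parts su21A.2.
apply/matrixP => a b; rewrite basis_map_entry big_ord8 !mxE.
move: (complex_parts_conj (su21_conj a b su21A)) (complex_parts_conj (su21_conj b a su21A)).
rewrite /sg21.
elim/ord3P: a; elim/ord3P: b; cbn [su21_su2_entry nat_of_ord] => /= -[? ?] [? ?];
  apply: complex_eq => /=; lra.
Qed.

Lemma su21_su2_commutators (i j : 'I_8) (a b : 'I_3) : (i < j)%N ->
  \sum_(l < 3) (su21_su2_entry i a l * su21_su2_entry j l b -
                su21_su2_entry j a l * su21_su2_entry i l b) =
  \sum_(k < 8) (su21_su2_consts i.+1 j.+1 k.+1)%:C%C * su21_su2_entry k a b.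
Proof.
rewrite !big_ord3 !big_ord8; elim/ord8P: i; elim/ord8P: j => // _.
all: elim/ord3P: a; elim/ord3P: b; cbn [su21_su2_entry su21_su2_consts nat_of_ord];
  apply: complex_eq => /=; by field.
Qed.

Lemma su21_su2_presentation :
  presents (fun a : R => a%:C%C) (@su21 R) (sc_bracket su21_su2_consts).
Proof.
exact: (presents_of_entries su21_su2_coordK su21_su2_psi su21_su2_psi_coord
  su21_su2_commutators).
Qed.

Lemma su21_su2_contracts_to_L72 :
  contraction_of (@sc_bracket R 8 su21_su2_consts) (@L72_L1 R).
Proof.
apply: (graded_contraction (w := iw_weight)); do 3 elim/ord8P; by [].
Qed.

End Su21Su2.

Section Sl3.
Variable R : realType.

Definition sl3_entry (k a b : nat) : R :=
  match k, a, b with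
  | 0, 0, 0 => 1
  | 0, 1, 1 => -1
  | 1, 0, 1 => 1
  | 2, 1, 0 => 1
  | 3, 0, 2 => 1
  | 4, 1, 2 => 1
  | 5, 2, 1 => -1
  | 6, 2, 0 => 1
  | 7, 0, 0 | 7, 1, 1 => 1
  | 7, 2, 2 => -2
  | _, _, _ => 0
  end.

Definition sl3_coord (A : 'M[R]_3) : 'rV[R]_8 := \row_(k < 8)
  match (k : nat) with
  | 0 => (A (ord3 0) (ord3 0) - A (ord3 1) (ord3 1)) / 2
  | 1 => A (ord3 0) (ord3 1)
  | 2 => A (ord3 1) (ord3 0)
  | 3 => A (ord3 0) (ord3 2)
  | 4 => A (ord3 1) (ord3 2)
  | 5 => - A (ord3 2) (ord3 1)
  | 6 => A (ord3 2) (ord3 0)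
  | _ => (A (ord3 0) (ord3 0) + A (ord3 1) (ord3 1)) / 2
  end.

Definition sl3_consts (i j k : nat) : R :=
  match i, j, k with
  | 1, 2, 2 => 2
  | 1, 3, 3 => -2
  | 1, 4, 4 => 1
  | 1, 5, 5 => -1
  | 1, 6, 6 => 1
  | 1, 7, 7 => -1
  | 2, 3, 1 => 1
  | 2, 5, 4 => 1
  | 2, 7, 6 => 1
  | 3, 4, 5 => 1
  | 3, 6, 7 => 1
  | 4, 6, 2 => -1
  | 4, 7, 1 => 1/2
  | 4, 7, 8 => 1/2
  | 4, 8, 4 => -3
  | 5, 6, 1 => 1/2
  | 5, 6, 8 => -(1/2)
  | 5, 7, 3 => 1
  | 5, 8, 5 => -3
  | 6, 8, 6 => 3
  | 7, 8, 7 => 3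
  | _, _, _ => 0
  end.

Local Notation psi := (basis_map idfun (@entry_basis R 8 3 sl3_entry)).

Lemma sl3_coordK x : sl3_coord (psi x) = x.
Proof.
apply/rowP; elim/ord8P; rewrite !mxE !basis_map_entry !big_ord8;
  cbn [sl3_entry nat_of_ord] => /=; by field.
Qed.

Lemma sl3_psi x : sl3R (psi x).
Proof.
rewrite /sl3R /mxtrace big_ord3 !basis_map_entry !big_ord8.
by cbn [sl3_entry nat_of_ord] => /=; field.
Qed.

Lemma sl3_psi_coord A : sl3R A -> psi (sl3_coord A) = A.
Proof.
rewrite /sl3R /mxtrace big_ord3 => tr; apply/matrixP => a b.
rewrite basis_map_entry big_ord8 !mxE.
elim/ord3P: a; elim/ord3P: b; cbn [sl3_entry nat_of_ord] => /=; lra.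
Qed.

Lemma sl3_commutators (i j : 'I_8) (a b : 'I_3) : (i < j)%N ->
  \sum_(l < 3) (sl3_entry i a l * sl3_entry j l b - sl3_entry j a l * sl3_entry i l b) =
  \sum_(k < 8) idfun (sl3_consts i.+1 j.+1 k.+1) * sl3_entry k a b.
Proof.
rewrite !big_ord3 !big_ord8; elim/ord8P: i; elim/ord8P: j => // _.
all: elim/ord3P: a; elim/ord3P: b; cbn [sl3_entry sl3_consts nat_of_ord] => /=; by field.
Qed.

Lemma sl3_presentation : presents (fun a : R => a) (@sl3R R) (sc_bracket sl3_consts).
Proof.
exact: (presents_of_entries sl3_coordK sl3_psi sl3_psi_coord sl3_commutators).
Qed.

Lemma sl3_contracts_to_L77 : contraction_of (@sc_bracket R 8 sl3_consts) (@L77_L1 R).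
Proof.
apply: (graded_contraction (w := iw_weight)); do 3 elim/ord8P; by [].
Qed.

End Sl3.

Section Su21Sl2.
Variable R : realType.

Definition su21_sl2_entry (k a b : nat) : R[i] :=
  match k, a, b with
  | 0, 0, 2 | 0, 2, 0 => Complex 1 0
  | 1, 0, 0 | 1, 2, 0 => Complex 0 (1/2)
  | 1, 0, 2 | 1, 2, 2 => Complex 0 (-1/2)
  | 2, 0, 0 | 2, 0, 2 => Complex 0 (-1/2)
  | 2, 2, 0 | 2, 2, 2 => Complex 0 (1/2)
  | 3, 0, 1 | 3, 1, 0 | 3, 2, 1 => Complex 0 (-1)
  | 3, 1, 2 => Complex 0 1
  | 4, 0, 1 => Complex (-1) 0
  | 4, 1, 0 | 4, 1, 2 | 4, 2, 1 => Complex 1 0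
  | 5, 0, 1 | 5, 1, 2 | 5, 2, 1 => Complex 1 0
  | 5, 1, 0 => Complex (-1) 0
  | 6, 0, 1 | 6, 1, 0 | 6, 1, 2 => Complex 0 (-1)
  | 6, 2, 1 => Complex 0 1
  | 7, 0, 0 | 7, 2, 2 => Complex 0 1
  | 7, 1, 1 => Complex 0 (-2)
  | _, _, _ => 0
  end.

Definition su21_sl2_coord (A : 'M[R[i]]_3) : 'rV[R]_8 := \row_(k < 8)
  match (k : nat) with
  | 0 => complex.Re (A (ord3 0) (ord3 2))
  | 1 => complex.Im (A (ord3 0) (ord3 0)) - complex.Im (A (ord3 0) (ord3 2))
           + complex.Im (A (ord3 1) (ord3 1)) / 2
  | 2 => - complex.Im (A (ord3 0) (ord3 0)) - complex.Im (A (ord3 0) (ord3 2))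
           - complex.Im (A (ord3 1) (ord3 1)) / 2
  | 3 => (complex.Im (A (ord3 1) (ord3 2)) - complex.Im (A (ord3 0) (ord3 1))) / 2
  | 4 => (complex.Re (A (ord3 1) (ord3 2)) - complex.Re (A (ord3 0) (ord3 1))) / 2
  | 5 => (complex.Re (A (ord3 0) (ord3 1)) + complex.Re (A (ord3 1) (ord3 2))) / 2
  | 6 => - (complex.Im (A (ord3 0) (ord3 1)) + complex.Im (A (ord3 1) (ord3 2))) / 2
  | _ => - complex.Im (A (ord3 1) (ord3 1)) / 2
  end.

Definition su21_sl2_consts (i j k : nat) : R :=
  match i, j, k with
  | 1, 2, 2 => 2
  | 1, 3, 3 => -2
  | 1, 4, 4 => 1
  | 1, 5, 5 => -1
  | 1, 6, 6 => 1
  | 1, 7, 7 => -1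
  | 2, 3, 1 => 1
  | 2, 5, 4 => 1
  | 2, 7, 6 => 1
  | 3, 4, 5 => 1
  | 3, 6, 7 => 1
  | 4, 5, 8 => -2
  | 4, 6, 2 => 4
  | 4, 7, 1 => -2
  | 4, 8, 6 => -3
  | 5, 6, 1 => -2
  | 5, 7, 3 => -4
  | 5, 8, 7 => -3
  | 6, 7, 8 => -2
  | 6, 8, 4 => 3
  | 7, 8, 5 => 3
  | _, _, _ => 0
  end.

Local Notation psi := (basis_map (real_complex R) (@entry_basis _ 8 3 su21_sl2_entry)).

Lemma su21_sl2_coordK x : su21_sl2_coord (psi x) = x.
Proof.
apply/rowP; elim/ord8P; rewrite !mxE !basis_map_entry !big_ord8;
  cbn [su21_sl2_entry nat_of_ord] => /=; by field.
Qed.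

Lemma su21_sl2_psi x : su21 (psi x).
Proof.
split.
  apply/matrixP => a b; rewrite J21E mul_mx_diag mul_diag_mx !mxE !basis_map_entry !big_ord8 /sg21.
  elim/ord3P: a; elim/ord3P: b; cbn [su21_sl2_entry nat_of_ord];
    apply: complex_eq => /=; by field.
rewrite /mxtrace big_ord3 !basis_map_entry !big_ord8; cbn [su21_sl2_entry nat_of_ord].
by apply: complex_eq => /=; field.
Qed.

Lemma su21_sl2_psi_coord A : su21 A -> psi (su21_sl2_coord A) = A.
Proof.
move=> su21A; have [tr_re tr_im] := trace_parts su21A.2.
apply/matrixP => a b; rewrite basis_map_entry big_ord8 !mxE.
move: (complex_parts_conj (su21_conj a b su21A)) (complex_parts_conj (su21_conj b a su21A)).
rewrite /sg21.
elim/ord3P: a; elim/ord3P: b; cbn [su21_sl2_entry nat_of_ord] => /= -[? ?] [? ?];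
  apply: complex_eq => /=; lra.
Qed.

Lemma su21_sl2_commutators (i j : 'I_8) (a b : 'I_3) : (i < j)%N ->
  \sum_(l < 3) (su21_sl2_entry i a l * su21_sl2_entry j l b -
                su21_sl2_entry j a l * su21_sl2_entry i l b) =
  \sum_(k < 8) (su21_sl2_consts i.+1 j.+1 k.+1)%:C%C * su21_sl2_entry k a b.
Proof.
rewrite !big_ord3 !big_ord8; elim/ord8P: i; elim/ord8P: j => // _.
all: elim/ord3P: a; elim/ord3P: b; cbn [su21_sl2_entry su21_sl2_consts nat_of_ord];
  apply: complex_eq => /=; by field.
Qed.

Lemma su21_sl2_presentation :
  presents (fun a : R => a%:C%C) (@su21 R) (sc_bracket su21_sl2_consts).
Proof.
exact: (presents_of_entries su21_sl2_coordK su21_sl2_psi su21_sl2_psi_coord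
  su21_sl2_commutators).
Qed.

Lemma su21_sl2_contracts_to_L77 :
  contraction_of (@sc_bracket R 8 su21_sl2_consts) (@L77_L1 R).
Proof.
apply: (graded_contraction (w := iw_weight)); do 3 elim/ord8P; by [].
Qed.

End Su21Sl2.

Theorem proposition7 (R : realType) :
  (is_contraction_of_su3 (@L72_L1 R) /\ is_contraction_of_su21 (@L72_L1 R)) /\
  (is_contraction_of_su21 (@L77_L1 R) /\ is_contraction_of_sl3R (@L77_L1 R)).
Proof.
split; split.
- exists (sc_bracket (@su3_consts R)).
  by split; [exact: su3_presentation | exact: su3_contracts_to_L72].
- exists (sc_bracket (@su21_su2_consts R)).
  by split; [exact: su21_su2_presentation | exact: su21_su2_contracts_to_L72].
- exists (sc_bracket (@su21_sl2_consts R)).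
  by split; [exact: su21_sl2_presentation | exact: su21_sl2_contracts_to_L77].
- exists (sc_bracket (@sl3_consts R)).
  by split; [exact: sl3_presentation | exact: sl3_contracts_to_L77].
Qed.
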